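(* Let $F=\{T_1,\dots,T_n\}$ be a finite family of reduction operators relative to a well-ordered set $(G,<)$, let $\tilde F=\{\tilde T_1,\dots,\tilde T_n\}$ be the reduction of $F$, and let $C=\{C_2,\dots,C_n\}$ be the incremental completion of $\tilde F$. Then $F\cup C$ is a completion of $F$.
   Context: Let $\mathbb{K}$ be a field, $(G,<)$ a well-ordered set and $\mathbb{K}G$ the vector space with basis $G$. For $v\neq0$, $\mathrm{lt}(v)$ is the greatest element of $G$ appearing with nonzero coefficient in $v$. Extend $<$ to $\mathbb{K}G$: $u<v$ if $u=0$ and $v\neq0$, or if $\mathrm{lt}(u)<\mathrm{lt}(v)$; $u\le v$ means $u<v$ or $u=v$. A reduction operator is an idempotent linear endomorphism $T$ of $\mathbb{K}G$ with $T(g)\le g$ for all $g\in G$; $\mathrm{nf}(T)=\{g\in G\mid T(g)=g\}$, $\mathrm{red}(T)=G\setminus\mathrm{nf}(T)$. For every subspace $V$ there is a unique reduction operator $\ker^{-1}(V)$ with kernel $V$. $T\vee T'=\ker^{-1}(\ker T\cap\ker T')$. For a set $F$ of reduction operators, $\wedge F=\ker^{-1}(\sum_{T\in F}\ker T)$, $\mathrm{nf}(F)=\bigcap_{T\in F}\mathrm{nf}(T)$, $\mathrm{obs}(F)=\mathrm{nf}(F)\setminus\mathrm{nf}(\wedge F)$; $F$ is confluent if $\mathrm{obs}(F)=\emptyset$; a completion of $F$ is a confluent set $F'$ of reduction operators with $F\subseteq F'$ and $\wedge F'=\wedge F$. For a set $F$, $C^F=(\wedge F)\vee\ker^{-1}(\mathbb{K}\,\mathrm{nf}(F))$,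 where $\mathbb{K}\,\mathrm{nf}(F)$ is the subspace spanned by $\mathrm{nf}(F)$. Syzygies: $\mathbf{ker}(F)=\ker T_1\times\dots\times\ker T_n$, $\pi_F(v_1,\dots,v_n)=v_1+\dots+v_n$, $\mathrm{syz}(F)=\ker\pi_F$. For $g\in\mathrm{red}(T_i)$, $e_{i,g}$ is the tuple with $g-T_i(g)$ at position $i$ and $0$ elsewhere; these form a basis of $\mathbf{ker}(F)$, well-ordered by $e_{i,g}\sqsubset e_{i',g'}$ iff $i<i'$, or $i=i'$ and $g<g'$; $\mathrm{lt}(\mathrm{syz}(F))$ is the set of $\sqsubset$-greatest basis elements appearing in nonzero syzygies. The reduction of $F$ is $\tilde F=\{\tilde T_1,\dots,\tilde T_n\}$ where $\tilde T_i$ is the linear map with $\tilde T_i(g)=g$ if $g\in\mathrm{red}(T_i)$ and $e_{i,g}\in\mathrm{lt}(\mathrm{syz}(F))$, and $\tilde T_i(g)=T_i(g)$ otherwise. Incremental completion of a family $\{S_1,\dots,S_n\}$: set $F_1=\{S_1\}$ and for $2\le i\le n$, $C_i=C^{F_{i-1}\cup\{S_i\}}$ and $F_i=F_{i-1}\cup\{S_i,C_i\}$; the incremental completion is $\{C_2,\dots,C_n\}$. *)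

From HB Require Import structures.
From mathcomp Require Import all_boot all_order all_algebra.
From mathcomp Require Import finmap.
From mathcomp.multinomials Require Import monalg.
From Stdlib Require Import ClassicalEpsilon.

Set Implicit Arguments.
Unset Strict Implicit.
Unset Printing Implicit Defensive.

Import Order.TTheory GRing.Theory.
Local Open Scope ring_scope.

(* K a field, (G,<) a totally ordered set (well-foundedness is a hypothesis
   of the theorem); the vector space KG with basis G is {malg K[G]}
   (finitely supported functions G -> K), basis element g is << g >>. *)

Section ReductionOperators.
Variables (K : fieldType) (d : Order.disp_t) (G : orderType d).
Local Notation V := {malg K[G]}.
Local Notation Op := (V -> V).

Definition is_lt (v : V) (g : G) : Prop :=
  g \in msupp v /\ forall h, h \in msupp v -> (h <= g)%O.

Definition vlt (u v : V) : Prop :=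
  (u = 0 /\ v <> 0) \/
  exists a b, [/\ is_lt u a, is_lt v b & (a < b)%O].

Definition vle (u v : V) : Prop := vlt u v \/ u = v.

Definition is_red_op (T : Op) : Prop :=
  [/\ linear T, (forall v, T (T v) = T v) & forall g : G, vle (T << g >>) << g >>].

Definition nf (T : Op) (g : G) : Prop := T << g >> = << g >>.
Definition red (T : Op) (g : G) : Prop := ~ nf T g.

(* ker^{-1}(V): the (unique) reduction operator with kernel V *)
Definition ker_inv (P : V -> Prop) : Op :=
  epsilon (inhabits id) (fun T => is_red_op T /\ forall v, T v = 0 <-> P v).

Definition join (T T' : Op) : Op := ker_inv (fun v => T v = 0 /\ T' v = 0).

Fixpoint ksum (F : seq Op) (v : V) : Prop :=
  match F with
  | [::] => v = 0
  | T :: F' => exists w, T w = 0 /\ ksum F' (v - w)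
  end.

Definition wedge (F : seq Op) : Op := ker_inv (ksum F).

Definition nfF (F : seq Op) (g : G) : Prop := forall T, List.In T F -> nf T g.

Definition obs (F : seq Op) (g : G) : Prop := nfF F g /\ ~ nf (wedge F) g.

Definition confluent (F : seq Op) : Prop := forall g, ~ obs F g.

Definition is_completion (F F' : seq Op) : Prop :=
  [/\ confluent F', (forall T, List.In T F -> List.In T F') & wedge F' = wedge F].

Definition span (P : G -> Prop) (v : V) : Prop :=
  exists s : seq (K * G), (forall x, List.In x s -> P x.2) /\
                          v = \sum_(x <- s) x.1 *: << x.2 >>.

Definition CF (F : seq Op) : Op := join (wedge F) (ker_inv (span (nfF F))).

(* The family F = T_0,...,T_(n-1) is indexed from 0.
   A finite linear combination of basis elements e_{i,g} of ker(F) is a list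
   of ((i,g),c); its j-th component is sum of c (g - T_j g) over i = j. *)
Definition syz_comp (F : seq Op) (L : seq ((nat * G) * K)) (j : nat) : V :=
  \sum_(x <- L | x.1.1 == j) x.2 *: (<< x.1.2 >> - nth id F j << x.1.2 >>).

(* e_{i,g} [= e_{i',g'} (reflexive closure of the well-order on basis) *)
Definition sqle (p q : nat * G) : Prop :=
  (p.1 < q.1)%N \/ (p.1 = q.1 /\ (p.2 <= q.2)%O).

(* e_{i,g} \in lt(syz(F)) : e_{i,g} is the greatest basis element appearing
   (with nonzero coefficient) in some nonzero syzygy *)
Definition in_lt_syz (F : seq Op) (i : nat) (g : G) : Prop :=
  exists L : seq ((nat * G) * K),
  [/\ uniq (map fst L),
      (forall x, x \in L -> [/\ (x.1.1 < size F)%N, red (nth id F x.1.1) x.1.2 & x.2 != 0]),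
      \sum_(j < size F) syz_comp F L j = 0,
      (exists j, (j < size F)%N /\ syz_comp F L j <> 0) &
      (i, g) \in map fst L /\
      forall p, p \in map fst L -> sqle p (i, g)].

Definition lin_ext (f : G -> V) (v : V) : V := \sum_(g <- msupp v) v@_g *: f g.

Definition reduce_op (F : seq Op) (i : nat) : Op :=
  lin_ext (fun g => if excluded_middle_informative
                         (red (nth id F i) g /\ in_lt_syz F i g)
                    then << g >> else nth id F i << g >>).

Definition reduction (F : seq Op) : seq Op := mkseq (reduce_op F) (size F).

(* incremental completion: Fp = F_{i-1}, S = remaining S_i, ..., S_n *)
Fixpoint inc_aux (Fp : seq Op) (S : seq Op) : seq Op :=
  match S with
  | [::] => [::]
  | Si :: S' => let C := CF (rcons Fp Si) in C :: inc_aux (Fp ++ [:: Si; C]) S'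
  end.

Definition inc_completion (S : seq Op) : seq Op :=
  match S with
  | [::] => [::]
  | S1 :: S' => inc_aux [:: S1] S'
  end.

End ReductionOperators.

From Pilot Require Import Defs.
From HB Require Import structures.
From mathcomp Require Import all_boot all_order all_algebra.
From mathcomp Require Import finmap.
From mathcomp.multinomials Require Import monalg.
From Stdlib Require Import ClassicalEpsilon FunctionalExtensionality PropExtensionality.

Set Implicit Arguments.
Unset Strict Implicit.
Unset Printing Implicit Defensive.

Import Order.TTheory GRing.Theory.
Local Open Scope ring_scope.

(* Write e_(i,g) = g - T_i(g).  The kernel sums of F and of its reduction ~F
   coincide: an e_(i,g) that is not the leading term of a syzygy of F lies in
   ker ~T_i, and one that is expresses it, through that syzygy, by basis
   elements e_(j,h) of ker(F) smaller than e_(i,g), which lie in the kernel sum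
   of ~F by well-founded induction.  Each step of the incremental completion
   adds C_i, whose kernel lies in the kernel sum of F_(i-1) u {S_i} and which
   reduces every leading term of that kernel sum lying in nf(F_(i-1) u {S_i}).
   Hence no element of nf(~F u C) is a leading term of the common kernel sum
   ker(wedge F) = ker(wedge (F u C)); as nf(F) is contained in nf(~F), neither
   is an element of nf(F u C), and since nf(T) is the complement of lt(ker T)
   for every reduction operator T, this says nf(F u C) = nf(wedge (F u C)). *)

Section ReductionOperatorTheory.
Variables (K : fieldType) (d : Order.disp_t) (G : orderType d).
Local Notation V := {malg K[G]}.
Local Notation Op := (V -> V).
Local Notation span := (@Defs.span K d G).

Lemma msupp_basis (k : G) : msupp (<< k >> : V) = [fset k]%fset.
Proof. by rewrite msuppU oner_eq0. Qed.

Lemma mcoeff_basis (k k' : G) : (<< k >> : V)@_k' = (k == k')%:R.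
Proof. by rewrite mcoeffU. Qed.

Lemma mem_msupp_basis (k h : G) : (h \in msupp (<< k >> : V)) = (h == k).
Proof. by rewrite msupp_basis in_fset1. Qed.

Lemma monalgUZ (c : K) (k : G) : << c *g k >> = c *: (<< k >> : V).
Proof. by apply/malgP => h; rewrite mcoeffZ !mcoeffU mulr_natr. Qed.

Lemma monalgZE (v : V) : v = \sum_(k <- msupp v) v@_k *: << k >>.
Proof. by rewrite {1}(monalgE v); apply: eq_bigr => k _; apply: monalgUZ. Qed.

Lemma mem_msuppD (u v : V) k : k \in msupp (u + v) -> (k \in msupp u) || (k \in msupp v).
Proof. by move/(fsubsetP (msuppD_le u v)); rewrite in_fsetU. Qed.

Lemma mem_msuppB (u v : V) k : k \in msupp (u - v) -> (k \in msupp u) || (k \in msupp v).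
Proof. by move/(fsubsetP (msuppB_le u v)); rewrite in_fsetU. Qed.

Lemma mem_msuppZ (c : K) (u : V) k : k \in msupp (c *: u) -> k \in msupp u.
Proof. exact: (fsubsetP (msuppZ_le c u)). Qed.

Section LinearMap.
Variable T : Op.
Hypothesis linT : linear T.

Lemma lin0 : T 0 = 0.
Proof.
have := linT 1 0 0; rewrite !scale1r addr0 => T0.
by apply: (@addrI _ (T 0)); rewrite -T0 addr0.
Qed.

Lemma linD u v : T (u + v) = T u + T v.
Proof. by have := linT 1 u v; rewrite !scale1r. Qed.

Lemma linZ a u : T (a *: u) = a *: T u.
Proof. by have := linT a u 0; rewrite !addr0 lin0 addr0. Qed.

Lemma linB u v : T (u - v) = T u - T v.
Proof. by rewrite linD -scaleN1r linZ scaleN1r. Qed.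

Lemma lin_sum (I : Type) (s : seq I) (P : pred I) (f : I -> V) :
  T (\sum_(i <- s | P i) f i) = \sum_(i <- s | P i) T (f i).
Proof. exact: (big_morph T linD lin0). Qed.

Lemma lin_coef v h : (T v)@_h = \sum_(k <- msupp v) v@_k * (T << k >>)@_h.
Proof.
rewrite {1}(monalgZE v) lin_sum raddf_sum /=; apply: eq_bigr => k _.
by rewrite linZ mcoeffZ.
Qed.

Lemma ker_lin_decomp v : T v = 0 -> v = \sum_(k <- msupp v) v@_k *: (<< k >> - T << k >>).
Proof.
move=> Tv; transitivity (v - T v); first by rewrite Tv subr0.
rewrite {1 2}(monalgZE v) lin_sum -sumrB.
by apply: eq_bigr => k _; rewrite linZ scalerBr.
Qed.

End LinearMap.

Lemma seq_max (s : seq G) (P : G -> Prop) : (exists2 x, x \in s & P x) ->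
  exists2 x, x \in s & P x /\ forall y, y \in s -> P y -> (y <= x)%O.
Proof.
elim: s => [[] //|a s IH] [x xas Px].
have [[y ys Py]|noPs] := classic (exists2 y, y \in s & P y); last first.
  have xa : x = a by move: xas; rewrite inE => /predU1P[// | xs]; case: noPs; exists x.
  exists a; rewrite ?mem_head -?xa //; split=> // y; rewrite inE => /predU1P[-> //|ys Py].
  by case: noPs; exists y.
have [m ms [Pm mmax]] := IH (ex_intro2 _ _ y ys Py).
have [[Pa ma]|not_Pa_ma] := classic (P a /\ (m < a)%O).
  exists a; rewrite ?mem_head //; split=> // z; rewrite inE => /predU1P[-> //|zs Pz].
  exact/ltW/(le_lt_trans (mmax z zs Pz)).
exists m; rewrite ?inE ?ms ?orbT //; split=> // z; rewrite inE => /predU1P[-> Pa|]; last exact: mmax.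
by rewrite leNgt; apply/negP => ma; apply: not_Pa_ma.
Qed.

Lemma is_lt_exists (v : V) : v != 0 -> exists g, is_lt v g.
Proof.
move=> v_neq0; have [g0 g0v] : exists g0, g0 \in msupp v.
  case E: (msupp v : seq G) => [|g0 s]; last by exists g0; have := mem_head g0 s; rewrite -E.
  by move: v_neq0; rewrite (monalgZE v) E big_nil eqxx.
have [g gv [_ gmax]] := @seq_max (msupp v) (fun _ => True) (ex_intro2 _ _ g0 g0v I).
by exists g; split=> // h hv; apply: gmax.
Qed.

Lemma is_lt_basis (g : G) : is_lt (<< g >> : V) g.
Proof. by split=> [|h]; rewrite mem_msupp_basis // => /eqP ->. Qed.

Lemma is_lt_basisE (g b : G) : is_lt (<< g >> : V) b -> b = g.
Proof. by case; rewrite mem_msupp_basis => /eqP. Qed.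

Lemma mem_msupp0 (h : G) : h \in msupp (0 : V) = false.
Proof. by rewrite msupp0 in_fset0. Qed.

Lemma red_op_lin (T : Op) : is_red_op T -> linear T. Proof. by case. Qed.

Lemma red_op_idem (T : Op) : is_red_op T -> forall v, T (T v) = T v. Proof. by case. Qed.

Section ReductionOperator.
Variable T : Op.
Hypothesis redT : is_red_op T.
Let linT := red_op_lin redT.

Lemma red_op_supp_lt g : red T g -> {in msupp (T << g >>), forall h, (h < g)%O}.
Proof.
move=> rg h hs; case: redT => _ _ /(_ g) [[[T0 _]|[a [b [[_ amax] /is_lt_basisE -> ab]]]]|//].
  by move: hs; rewrite T0 mem_msupp0.
exact: le_lt_trans (amax h hs) ab.
Qed.

Lemma red_op_supp_le g : {in msupp (T << g >>), forall h, (h <= g)%O}.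
Proof.
move=> h hs; have [ng|rg] := classic (nf T g); last exact/ltW/(red_op_supp_lt rg).
by move: hs; rewrite ng mem_msupp_basis => /eqP ->.
Qed.

Lemma red_op_coef_gt g h : (g < h)%O -> (T << g >>)@_h = 0.
Proof.
move=> gh; apply/eqP; rewrite mcoeff_eq0; apply/negP => /red_op_supp_le.
by rewrite leNgt gh.
Qed.

Lemma red_op_coef_diag g : red T g -> (T << g >>)@_g = 0.
Proof.
by move=> rg; apply/eqP; rewrite mcoeff_eq0; apply/negP => /(red_op_supp_lt rg); rewrite ltxx.
Qed.

Lemma red_op_ker_basis g : red T g ->
  T (<< g >> - T << g >>) = 0 /\ is_lt (<< g >> - T << g >>) g.
Proof.
move=> rg; split; first by rewrite linB // red_op_idem // subrr.
split=> [|h /mem_msuppB /orP [|hs]].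
- by rewrite -mcoeff_neq0 mcoeffB red_op_coef_diag // subr0 mcoeff_basis eqxx oner_eq0.
- by rewrite mem_msupp_basis => /eqP ->.
- exact/ltW/(red_op_supp_lt rg).
Qed.

Lemma nf_not_lt_ker g v : nf T g -> T v = 0 -> ~ is_lt v g.
Proof.
move=> ng Tv [gv gmax].
have coef_g : (T v)@_g = v@_g.
  rewrite lin_coef // (big_fsetD1 g) //= ng mcoeff_basis eqxx mulr1 big1_fset ?addr0 // => k.
  rewrite in_fsetD1 => /andP [kg kv] _.
  by rewrite red_op_coef_gt ?mulr0 // lt_neqAle kg gmax.
by move: gv; rewrite -mcoeff_neq0 -coef_g Tv mcoeff0 eqxx.
Qed.

(* The largest reducible element of the support of u has coefficient 0 in T u. *)
Lemma fixed_supp_nf u : T u = u -> {in msupp u, forall h, nf T h}.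
Proof.
move=> Tu h hu; apply: NNPP => rh.
have [m mu [rm mmax]] := @seq_max (msupp u) (red T) (ex_intro2 _ _ h hu rh).
move: mu; rewrite -mcoeff_neq0 -{1}Tu lin_coef // big1_fset ?eqxx // => k ku _.
have [->|km] := eqVneq k m; first by rewrite red_op_coef_diag ?mulr0.
have [nk|rk] := classic (nf T k); first by rewrite nk mcoeff_basis (negbTE km) mulr0.
by rewrite red_op_coef_gt ?mulr0 // lt_neqAle km mmax.
Qed.

End ReductionOperator.


Definition subspace (P : V -> Prop) := P 0 /\ forall a u v, P u -> P v -> P (a *: u + v).

Definition in_lt (P : V -> Prop) (g : G) := exists v, P v /\ is_lt v g.

Section Subspace.
Variable P : V -> Prop.
Hypothesis subP : subspace P.

Lemma subspace0 : P 0. Proof. by case: subP. Qed.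

Lemma subspaceD u v : P u -> P v -> P (u + v).
Proof. by case: subP => _ closedP Pu Pv; have := closedP 1 u v Pu Pv; rewrite scale1r. Qed.

Lemma subspaceZ a u : P u -> P (a *: u).
Proof. by case: subP => P0 closedP Pu; have := closedP a u 0 Pu P0; rewrite addr0. Qed.

Lemma subspaceB u v : P u -> P v -> P (u - v).
Proof. by move=> Pu Pv; rewrite -scaleN1r; apply/subspaceD/subspaceZ. Qed.

Lemma subspace_combB a u u' v v' :
  P (u - u') -> P (v - v') -> P ((a *: u + v) - (a *: u' + v')).
Proof.
have -> : a *: u + v - (a *: u' + v') = a *: (u - u') + (v - v').
  by rewrite scalerBr opprD addrACA.
by case: subP => _; apply.
Qed.

Lemma subspace_sum (I : Type) (s : seq I) (Q : pred I) (f : I -> V) :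
  (forall i, Q i -> P (f i)) -> P (\sum_(i <- s | Q i) f i).
Proof. by move=> Pf; apply: (big_ind P); [exact: subspace0 | exact: subspaceD |]. Qed.

End Subspace.

Lemma in_lt_sub (P Q : V -> Prop) g : (forall v, P v -> Q v) -> in_lt P g -> in_lt Q g.
Proof. by move=> PQ [v [Pv lv]]; exists v; split=> //; apply: PQ. Qed.

Lemma red_op_nfP (T : Op) (P : V -> Prop) : is_red_op T ->
  (forall v, T v = 0 <-> P v) -> forall g, nf T g <-> ~ in_lt P g.
Proof.
move=> redT kerT g; split=> [ng [v [/kerT Tv lv]]|not_lt_g]; first exact: nf_not_lt_ker ng Tv lv.
apply: NNPP => rg; apply: not_lt_g; have [Tu lu] := red_op_ker_basis redT rg.
by exists (<< g >> - T << g >>); split=> //; apply/kerT.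
Qed.

Section KernelInverse.
Hypothesis wfG : well_founded (fun x y : G => (x < y)%O).
Variable P : V -> Prop.
Hypothesis subP : subspace P.

Definition normal_form (v w : V) := P (v - w) /\ {in msupp w, forall k, ~ in_lt P k}.

Lemma normal_form_uniq v w1 w2 : normal_form v w1 -> normal_form v w2 -> w1 = w2.
Proof.
move=> [P1 N1] [P2 N2]; apply/eqP; rewrite -subr_eq0; apply/negP => /negP /is_lt_exists [g lg].
have P12 : P (w1 - w2).
  have -> : w1 - w2 = (v - w2) - (v - w1) by rewrite opprB [RHS]addrC addrA subrK.
  exact: subspaceB.
case: (lg) => /mem_msuppB /orP [/N1|/N2] not_lt_g _; apply: not_lt_g; by exists (w1 - w2).
Qed.

Lemma normal_form0 : normal_form 0 0.
Proof. by split=> [|k]; rewrite ?subr0 ?mem_msupp0 //; exact: subspace0. Qed.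

(* Well-founded induction on a bound g of the support: the coefficient of g is
   cancelled by a vector of P with leading term g if there is one, and is kept
   in the normal form otherwise. *)
Lemma normal_form_exists_le g v : {in msupp v, forall k, (k <= g)%O} ->
  exists2 w, normal_form v w & {in msupp w, forall k, (k <= g)%O}.
Proof.
elim/(well_founded_induction wfG): g v => g IH v vg.
have below v' : {in msupp v', forall k, (k < g)%O} ->
    exists2 w, normal_form v' w & {in msupp w, forall k, (k <= g)%O}.
  move=> v'g; have [->|/is_lt_exists [m [mv' mmax]]] := eqVneq v' 0.
    by exists 0 => [|k]; rewrite ?mem_msupp0 //; exact: normal_form0.
  have [w nf_w wm] := IH m (v'g m mv') v' mmax.
  by exists w => // k /wm km; apply/ltW/(le_lt_trans km)/v'g.
have cancel_g x : {in msupp x, forall k, (k <= g)%O} -> x@_g != 0 ->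
    {in msupp (v - (v@_g / x@_g) *: x), forall k, (k < g)%O}.
  move=> xg xg_neq0 k kv'; rewrite lt_neqAle; apply/andP; split.
    by apply: contraTneq kv' => ->; rewrite -mcoeff_eq0 mcoeffB mcoeffZ divfK // subrr.
  by move: kv' => /mem_msuppB /orP [/vg | /mem_msuppZ /xg].
case: (classic (in_lt P g)) => [[p [Pp [gp pg]]] | not_lt_g].
  have [|w [Pw wN] wg] := below _ (cancel_g p pg _); first by rewrite mcoeff_neq0.
  exists w => //; split=> //; set c := v@_g / p@_g in Pw *.
  have -> : v - w = c *: p + (v - c *: p - w) by rewrite addrA [c *: p + _]addrC subrK.
  by case: subP => _; apply.
have basis_g : {in msupp (<< g >> : V), forall k, (k <= g)%O}.
  by move=> k; rewrite mem_msupp_basis => /eqP ->.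
have [|w [Pw wN] wg] := below _ (cancel_g _ basis_g _).
  by rewrite mcoeff_basis eqxx oner_eq0.
set c := v@_g / _ in Pw wg; exists (w + c *: << g >>).
  split; first by rewrite opprD addrA addrAC.
  by move=> k /mem_msuppD /orP [/wN // | /mem_msuppZ]; rewrite mem_msupp_basis => /eqP ->.
by move=> k /mem_msuppD /orP [/wg // | /mem_msuppZ /basis_g].
Qed.

Lemma normal_form_exists v : exists w, normal_form v w.
Proof.
have [->|/is_lt_exists [g [_ gmax]]] := eqVneq v 0; first by exists 0; exact: normal_form0.
by have [w nf_w _] := normal_form_exists_le gmax; exists w.
Qed.

Lemma normal_form_basis g w : normal_form << g >> w -> vle w << g >>.
Proof.
move=> nf_w; have basis_g : {in msupp (<< g >> : V), forall k, (k <= g)%O}.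
  by move=> k; rewrite mem_msupp_basis => /eqP ->.
case: (classic (in_lt P g)) => [lt_g | not_lt_g]; last first.
  right; apply: (normal_form_uniq nf_w); split=> [|k]; first by rewrite subrr; exact: subspace0.
  by rewrite mem_msupp_basis => /eqP ->.
have [w' nf_w' w'g] := normal_form_exists_le basis_g; rewrite (normal_form_uniq nf_w nf_w').
have w'_lt : {in msupp w', forall k, (k < g)%O}.
  move=> k kw'; rewrite lt_neqAle w'g // andbT.
  by apply: contraTneq kw' => ->; apply/negP => /(proj2 nf_w').
left; have [->|/is_lt_exists [a [aw' amax]]] := eqVneq w' 0.
  by left; split=> //; apply/eqP; rewrite monalgU_eq0 oner_eq0.
by right; exists a, g; split=> //; [exact: is_lt_basis | exact: w'_lt].
Qed.

Lemma red_op_with_kernel : exists T : Op, is_red_op T /\ forall v, T v = 0 <-> P v.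
Proof.
pose T v := epsilon (inhabits 0) (normal_form v).
have nfT v : normal_form v (T v) by apply: epsilon_spec; exact: normal_form_exists.
have TE v w : normal_form v w -> T v = w := normal_form_uniq (nfT v).
exists T; split; last first.
  move=> v; split=> [Tv|Pv]; first by have [] := nfT v; rewrite Tv subr0.
  by apply/TE; split=> [|k]; rewrite ?subr0 ?mem_msupp0.
split=> [a u v | v | g]; last exact: normal_form_basis.
  apply/TE; split; last first.
    by move=> k /mem_msuppD /orP [/mem_msuppZ /(nfT u).2 | /(nfT v).2].
  by apply: (subspace_combB subP); [case: (nfT u) | case: (nfT v)].
by apply/TE; split; [rewrite subrr; exact: (subspace0 subP) | exact: (nfT v).2].
Qed.

Lemma ker_invP : is_red_op (ker_inv P) /\ forall v, ker_inv P v = 0 <-> P v.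
Proof. exact: (epsilon_spec _ _ red_op_with_kernel). Qed.

End KernelInverse.

Lemma In_mem (T : eqType) (x : T) (s : seq T) : List.In x s <-> x \in s.
Proof.
elim: s => [|a s IH] //=; rewrite inE; split.
  by case=> [->|/IH ->]; rewrite ?eqxx ?orbT.
by case/predU1P => [->|/IH]; [left|right].
Qed.

Definition all_red_op (X : seq Op) := forall T, List.In T X -> is_red_op T.

Lemma all_red_op_cat (A B : seq Op) :
  all_red_op (A ++ B) <-> all_red_op A /\ all_red_op B.
Proof.
split=> [redAB | [redA redB] T /List.in_app_iff [/redA|/redB] //].
by split=> T XT; apply: redAB; apply/List.in_app_iff; [left|right].
Qed.

Lemma all_red_op_cons (T : Op) (A : seq Op) :
  all_red_op (T :: A) <-> is_red_op T /\ all_red_op A.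
Proof.
split=> [redTA | [redT redA] T' [<-|/redA] //].
by split=> [|T' AT']; apply: redTA; [left|right].
Qed.

Lemma ksum_subspace (X : seq Op) : all_red_op X -> subspace (ksum X).
Proof.
elim: X => [_|T Y IH /all_red_op_cons [[linT _ _] /IH subY]].
  by split=> // a u v -> ->; rewrite scaler0 addr0.
split; first by exists 0; rewrite lin0 // subrr; split=> //; exact: (subspace0 subY).
move=> a u v [wu [Twu Yu]] [wv [Twv Yv]]; exists (a *: wu + wv); split.
  by rewrite linT Twu Twv scaler0 addr0.
exact: (subspace_combB subY).
Qed.

Lemma ker_ksum (X : seq Op) T w : all_red_op X -> List.In T X -> T w = 0 -> ksum X w.
Proof.
elim: X => [//|T' Y IH /all_red_op_cons [redT' redY]] /= [<-|YT] Tw.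
  by exists w; rewrite subrr; split=> //; case: (ksum_subspace redY).
by exists 0; rewrite subr0 (lin0 (red_op_lin redT')); split=> //; apply: IH.
Qed.

Lemma ksum_min (X : seq Op) (Q : V -> Prop) : subspace Q ->
  (forall T, List.In T X -> forall w, T w = 0 -> Q w) -> forall v, ksum X v -> Q v.
Proof.
move=> subQ; elim: X => [|T X IH] kerQ v /=; first by move=> ->; exact: subspace0.
move=> [w [Tw Xvw]]; rewrite -(subrK w v); apply: subspaceD => //.
  by apply: IH => // T' XT'; apply: kerQ; right.
by apply: (kerQ T) => //; left.
Qed.

Lemma ksum_le (A B : seq Op) : all_red_op B ->
  (forall T, List.In T A -> forall w, T w = 0 -> ksum B w) -> forall v, ksum A v -> ksum B v.
Proof. by move=> redB; apply: ksum_min; exact: ksum_subspace. Qed.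

Lemma ksum_subset (A B : seq Op) : all_red_op B ->
  (forall T, List.In T A -> List.In T B) -> forall v, ksum A v -> ksum B v.
Proof. by move=> redB AB; apply: ksum_le => // T AT w; apply/ker_ksum/AB. Qed.

Lemma wedge_ext (A B : seq Op) : (forall v, ksum A v <-> ksum B v) -> wedge A = wedge B.
Proof.
move=> AB; rewrite /wedge; congr ker_inv.
by apply: functional_extensionality => v; apply: propositional_extensionality.
Qed.

Lemma span_subspace (Q : G -> Prop) : subspace (span Q).
Proof.
split; first by exists [::]; rewrite big_nil.
move=> a u v [su [Qu ->]] [sv [Qv ->]].
exists ([seq (a * x.1, x.2) | x <- su] ++ sv); split.
  by move=> x /List.in_app_iff [/List.in_map_iff [y [<- /Qu]] | /Qv].
rewrite big_cat big_map scaler_sumr; congr (_ + _); apply: eq_bigr => x _.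
by rewrite scalerA.
Qed.

Lemma span_supp (Q : G -> Prop) v : {in msupp v, forall k, Q k} -> span Q v.
Proof.
move=> Qv; exists [seq (v@_k, k) | k <- msupp v]; split; last by rewrite big_map -monalgZE.
by move=> x /List.in_map_iff [k [<- /In_mem /Qv]].
Qed.

Section Completion.
Hypothesis wfG : well_founded (fun x y : G => (x < y)%O).

Lemma wedgeP X : all_red_op X ->
  is_red_op (wedge X) /\ forall v, wedge X v = 0 <-> ksum X v.
Proof. by move=> redX; apply: ker_invP => //; exact: ksum_subspace. Qed.

Lemma joinP (T T' : Op) : is_red_op T -> is_red_op T' ->
  is_red_op (join T T') /\ forall v, join T T' v = 0 <-> T v = 0 /\ T' v = 0.
Proof.
move=> /red_op_lin linT /red_op_lin linT'; apply: (ker_invP wfG).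
split=> [|a u v [Tu T'u] [Tv T'v]]; first by rewrite !lin0.
by rewrite linT linT' Tu Tv T'u T'v scaler0 addr0.
Qed.

Lemma CFP X : all_red_op X ->
  is_red_op (CF X) /\ forall v, CF X v = 0 <-> ksum X v /\ span (nfF X) v.
Proof.
move=> redX; have [redW kerW] := wedgeP redX.
have [redS kerS] := ker_invP wfG (span_subspace (nfF X)).
have [redC kerC] := joinP redW redS.
by split=> // v; rewrite kerC kerW kerS.
Qed.

Lemma nf_wedge_nfF X g : all_red_op X -> nf (wedge X) g -> nfF X g.
Proof.
move=> redX nWg T XT; have [redW kerW] := wedgeP redX.
apply/(@red_op_nfP T (fun v => T v = 0) (redX T XT)) => // lt_g.
by move/(red_op_nfP redW kerW _): nWg; apply; apply: in_lt_sub lt_g => w /(ker_ksum redX XT).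
Qed.

Lemma lt_free_confluent X : all_red_op X ->
  (forall g, nfF X g -> ~ in_lt (ksum X) g) -> confluent X.
Proof.
move=> redX lt_free g [nXg []]; have [redW kerW] := wedgeP redX.
by apply/(red_op_nfP redW kerW _); apply: lt_free.
Qed.

(* If g were the leading term of some v in ksum X, then g - (wedge X) g would be
   a vector of ker (CF X) with leading term g: it lies in ksum X, and its support
   is in nf(X) because nf (wedge X) is contained in nf(X). *)
Lemma CF_lt_free X g : all_red_op X -> nfF X g -> nf (CF X) g -> ~ in_lt (ksum X) g.
Proof.
move=> redX nXg nCg lt_g; have [redW kerW] := wedgeP redX; have [redC kerC] := CFP redX.
have rWg : red (wedge X) g by move/(red_op_nfP redW kerW _).
have [Wu lu] := red_op_ker_basis redW rWg.
apply: (red_op_nfP redC kerC _).1 nCg _; exists (<< g >> - wedge X << g >>); split=> //.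
split; first exact/kerW.
apply: span_supp => k /mem_msuppB /orP [|kW]; first by rewrite mem_msupp_basis => /eqP ->.
exact: nf_wedge_nfF redX (fixed_supp_nf redW (red_op_idem redW _) kW).
Qed.

Lemma all_red_op_rcons Fp (Si : Op) :
  all_red_op Fp -> is_red_op Si -> all_red_op (rcons Fp Si).
Proof. by rewrite -cats1 => redFp redSi T /List.in_app_iff [/redFp | [<- | []]]. Qed.

Lemma all_red_op_inc_step Fp (Si : Op) : all_red_op Fp -> is_red_op Si ->
  all_red_op (Fp ++ [:: Si; CF (rcons Fp Si)]).
Proof.
move=> redFp redSi; have redC := (CFP (all_red_op_rcons redFp redSi)).1.
by move=> T /List.in_app_iff [/redFp | [<- | [<- | []]]].
Qed.

Lemma ksum_inc_step Fp (Si : Op) S v : all_red_op Fp -> is_red_op Si -> all_red_op S ->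
  ksum ((Fp ++ [:: Si; CF (rcons Fp Si)]) ++ S) v <-> ksum (Fp ++ Si :: S) v.
Proof.
move=> redFp redSi redS; have redX := all_red_op_rcons redFp redSi.
have red_new : all_red_op (Fp ++ Si :: S).
  by apply/all_red_op_cat; split=> //; apply/all_red_op_cons.
have red_old : all_red_op ((Fp ++ [:: Si; CF (rcons Fp Si)]) ++ S).
  by apply/all_red_op_cat; split=> //; exact: all_red_op_inc_step.
split; last by apply: ksum_subset => // T; rewrite !List.in_app_iff /=; tauto.
apply: ksum_le => // T T_in w Tw.
have [C_T|T_old] : CF (rcons Fp Si) = T \/ List.In T (Fp ++ Si :: S).
  by move: T_in; rewrite !List.in_app_iff /=; tauto.
- move: Tw; rewrite -C_T => /(CFP redX).2 [+ _]; apply: ksum_subset => // T'.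
  by rewrite -cats1 !List.in_app_iff /=; tauto.
- exact: ker_ksum red_new T_old Tw.
Qed.

Lemma inc_step_lt_free Fp (Si : Op) : all_red_op Fp -> is_red_op Si ->
  forall g, nfF (Fp ++ [:: Si; CF (rcons Fp Si)]) g ->
  ~ in_lt (ksum (Fp ++ [:: Si; CF (rcons Fp Si)])) g.
Proof.
move=> redFp redSi g nFg; have redX := all_red_op_rcons redFp redSi.
have ksumX v : ksum (Fp ++ [:: Si; CF (rcons Fp Si)]) v -> ksum (rcons Fp Si) v.
  have := (ksum_inc_step v redFp redSi (S := [::]) (fun _ => False_ind _)).1.
  by rewrite cats0 cats1.
move/(in_lt_sub ksumX); apply: CF_lt_free redX _ _ => [T XT|]; apply: nFg.
  by move: XT; rewrite -cats1 !List.in_app_iff /=; tauto.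
by rewrite List.in_app_iff /=; tauto.
Qed.

Lemma inc_aux_red Fp S : all_red_op Fp -> all_red_op S -> all_red_op (inc_aux Fp S).
Proof.
elim: S Fp => [//|Si S IH] Fp redFp /all_red_op_cons [redSi redS] /=.
apply/all_red_op_cons; split; first exact: (CFP (all_red_op_rcons redFp redSi)).1.
exact: IH (all_red_op_inc_step redFp redSi) redS.
Qed.

Lemma inc_aux_ker Fp S C w : all_red_op Fp -> all_red_op S ->
  List.In C (inc_aux Fp S) -> C w = 0 -> ksum (Fp ++ S) w.
Proof.
elim: S Fp => [//|Si S IH] Fp redFp /all_red_op_cons [redSi redS] /= C_in Cw.
have redFp' := all_red_op_inc_step redFp redSi.
apply/(ksum_inc_step w redFp redSi redS).
case: C_in => [C_CF|C_in]; last exact: IH redFp' redS C_in Cw.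
apply: ker_ksum Cw; first by apply/all_red_op_cat.
by rewrite -C_CF !List.in_app_iff /=; tauto.
Qed.

Lemma inc_aux_lt_free Fp S : all_red_op Fp -> all_red_op S ->
  (forall g, nfF Fp g -> ~ in_lt (ksum Fp) g) ->
  forall g, nfF (Fp ++ S ++ inc_aux Fp S) g -> ~ in_lt (ksum (Fp ++ S)) g.
Proof.
elim: S Fp => [|Si S IH] Fp redFp; first by rewrite /= !cats0.
move=> /all_red_op_cons [redSi redS] _ g /= nFg.
move/(in_lt_sub (fun v => (ksum_inc_step v redFp redSi redS).2)).
apply: IH (all_red_op_inc_step redFp redSi) redS (inc_step_lt_free redFp redSi) _ _.
by move=> T T_in; apply: nFg; move: T_in; rewrite !List.in_app_iff /= !List.in_app_iff /=; tauto.
Qed.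

Lemma inc_completion_red S : all_red_op S -> all_red_op (inc_completion S).
Proof.
case: S => [//|S1 S] /all_red_op_cons [redS1 redS].
by apply: inc_aux_red => // T [<- | []].
Qed.

Lemma inc_completion_ker S C w : all_red_op S ->
  List.In C (inc_completion S) -> C w = 0 -> ksum S w.
Proof. by case: S => [//|S1 S] /all_red_op_cons [redS1 redS]; apply: inc_aux_ker => // T [<- | []]. Qed.

Lemma inc_completion_lt_free S : all_red_op S ->
  forall g, nfF (S ++ inc_completion S) g -> ~ in_lt (ksum S) g.
Proof.
case: S => [_ g _ [v [/= -> [] ]]|S1 S /all_red_op_cons [redS1 redS]]; first by rewrite mem_msupp0.
apply: (@inc_aux_lt_free [:: S1]) => // [T [<- | []] // |].
move=> g nS1 [v [[w [S1w /eqP]]]]; rewrite subr_eq0 => /eqP -> lw.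
by apply: (nf_not_lt_ker redS1 _ S1w lw); apply: nS1; left.
Qed.

End Completion.

Section LinearExtension.
Variable f : G -> V.

Lemma lin_extEw v (D : {fset G}) : (msupp v `<=` D)%fset ->
  lin_ext f v = \sum_(k <- D) v@_k *: f k.
Proof.
move=> vD; rewrite /lin_ext (big_fset_incl _ vD) // => k _ /mcoeff_outdom ->.
by rewrite scale0r.
Qed.

Lemma lin_ext_lin : linear (lin_ext f).
Proof.
move=> a u v; pose D := (msupp u `|` msupp v)%fset.
have uD : (msupp u `<=` D)%fset by apply/fsubsetP => k ku; rewrite in_fsetU ku.
have vD : (msupp v `<=` D)%fset by apply/fsubsetP => k kv; rewrite in_fsetU kv orbT.
have uvD : (msupp (a *: u + v) `<=` D)%fset.
  by apply/fsubsetP => k /mem_msuppD /orP [/mem_msuppZ /(fsubsetP uD) | /(fsubsetP vD)].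
rewrite (lin_extEw uvD) (lin_extEw uD) (lin_extEw vD) scaler_sumr -big_split /=.
by apply: eq_bigr => k _; rewrite mcoeffD mcoeffZ scalerDl scalerA.
Qed.

Lemma lin_extU g : lin_ext f << g >> = f g.
Proof. by rewrite /lin_ext msupp_basis big_seq_fset1 mcoeff_basis eqxx scale1r. Qed.

Lemma lin_ext_id u : {in msupp u, forall h, f h = << h >>} -> lin_ext f u = u.
Proof. by move=> fu; rewrite [RHS]monalgZE; apply: eq_big_seq => k /fu ->. Qed.

End LinearExtension.

Lemma In_nth (A : Type) (x0 : A) (s : seq A) i : (i < size s)%N -> List.In (nth x0 s i) s.
Proof. by elim: s i => [|a s IH] [|i] //= i_lt; [left | right; apply: IH]. Qed.

Lemma In_nthP (A : Type) (x0 : A) (s : seq A) x :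
  List.In x s -> exists2 i, (i < size s)%N & x = nth x0 s i.
Proof.
elim: s => [|a s IH] //= [->|/IH [i i_lt ->]]; first by exists 0%N.
by exists i.+1.
Qed.

Section Reduction.
Variable F : seq Op.
Hypothesis redF : all_red_op F.

Local Notation T_ i := (nth id F i).
Local Notation ebasis i g := (<< g >> - nth id F i << g >>).

Definition reduce_basis i (g : G) : V :=
  if excluded_middle_informative (red (T_ i) g /\ in_lt_syz F i g)
  then << g >> else T_ i << g >>.

Lemma reduce_opE i : reduce_op F i = lin_ext (reduce_basis i).
Proof. by []. Qed.

Lemma In_reduction T :
  List.In T (reduction F) <-> exists2 i, (i < size F)%N & T = reduce_op F i.
Proof.
rewrite /reduction /mkseq List.in_map_iff; split=> [[i [<- /In_mem]]|[i i_lt ->]].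
  by rewrite mem_iota add0n; exists i.
by exists i; split=> //; apply/In_mem; rewrite mem_iota.
Qed.

Lemma reduce_basis_nf i g : nf (T_ i) g -> reduce_basis i g = << g >>.
Proof. by rewrite /reduce_basis => ng; case: excluded_middle_informative. Qed.

Lemma reduce_basis_not_lt_syz i g : ~ in_lt_syz F i g -> reduce_basis i g = T_ i << g >>.
Proof.
rewrite /reduce_basis => not_lt; case: excluded_middle_informative => // red_lt.
by case: not_lt; case: red_lt.
Qed.

Lemma reduce_basisE i g : reduce_basis i g = << g >> \/ reduce_basis i g = T_ i << g >>.
Proof. by rewrite /reduce_basis; case: excluded_middle_informative; [left | right]. Qed.

Lemma reduce_op_red i : (i < size F)%N -> is_red_op (reduce_op F i).
Proof.
move=> i_lt; have redT := redF (In_nth id i_lt); rewrite reduce_opE.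
have fixed k : lin_ext (reduce_basis i) (reduce_basis i k) = reduce_basis i k.
  case: (reduce_basisE i k) => E; rewrite E; first by rewrite lin_extU E.
  apply: lin_ext_id => h /(fixed_supp_nf redT (red_op_idem redT _)).
  exact: reduce_basis_nf.
split=> [|v|g]; first exact: lin_ext_lin.
  rewrite [in RHS]/lin_ext (lin_sum (lin_ext_lin _)).
  by apply: eq_bigr => k _; rewrite (linZ (lin_ext_lin _)) fixed.
rewrite lin_extU; case: (reduce_basisE i g) => ->; [right | case: redT] => //.
Qed.

Lemma reduce_op_nf i g : nf (T_ i) g -> nf (reduce_op F i) g.
Proof. by move=> ng; rewrite /nf reduce_opE lin_extU reduce_basis_nf. Qed.

Lemma all_red_op_reduction : all_red_op (reduction F).
Proof. by move=> T /In_reduction [i i_lt ->]; exact: reduce_op_red. Qed.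

Lemma reduce_op_ker i v : (i < size F)%N -> reduce_op F i v = 0 -> T_ i v = 0.
Proof.
move=> i_lt; have redT := redF (In_nth id i_lt); have linT := red_op_lin redT.
rewrite reduce_opE => Rv; rewrite (ker_lin_decomp (lin_ext_lin _) Rv) lin_sum //.
apply: big1 => k _; rewrite linZ // linB // lin_extU.
case: (reduce_basisE i k) => ->; first by rewrite subrr scaler0.
by rewrite red_op_idem // subrr scaler0.
Qed.

Lemma reduce_op_ker_basis i g : (i < size F)%N -> ~ in_lt_syz F i g ->
  reduce_op F i (ebasis i g) = 0.
Proof.
move=> i_lt not_lt; have redR := reduce_op_red i_lt.
have Rg : reduce_op F i << g >> = T_ i << g >>.
  by rewrite reduce_opE lin_extU reduce_basis_not_lt_syz.
by rewrite (linB (red_op_lin redR)) -Rg red_op_idem ?subrr.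
Qed.

Lemma syz_sum (L : seq ((nat * G) * K)) : {in L, forall x, x.1.1 < size F}%N ->
  \sum_(j < size F) syz_comp F L j = \sum_(x <- L) x.2 *: ebasis x.1.1 x.1.2.
Proof.
move=> L_lt; rewrite /syz_comp; under eq_bigr => j _ do rewrite big_mkcond.
rewrite exchange_big /=; apply: eq_big_seq => x /L_lt x_lt.
rewrite (bigD1 (Ordinal x_lt)) //= eqxx big1 ?addr0 // => j.
by rewrite -val_eqE /= eq_sym => /negbTE ->.
Qed.

Lemma syz_lead_eq (L : seq ((nat * G) * K)) x0 : x0 \in L -> x0.2 != 0 ->
  \sum_(x <- L) x.2 *: ebasis x.1.1 x.1.2 = 0 ->
  ebasis x0.1.1 x0.1.2 = - x0.2^-1 *: \sum_(y <- rem x0 L) y.2 *: ebasis y.1.1 y.1.2.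
Proof.
move=> x0L x0_neq0; rewrite (big_rem x0) //= => /eqP; rewrite addr_eq0 => /eqP x0_sum.
by rewrite scaleNr -scalerN -x0_sum scalerA mulVf // scale1r.
Qed.

Section KernelSumOfReduction.
Hypothesis wfG : well_founded (fun x y : G => (x < y)%O).

(* Double induction on (i, g): a syzygy with leading term e_(i,g) expresses
   e_(i,g) through the e_(j,h) with j < i, or j = i and h < g. *)
Lemma ebasis_ksum_reduction i g : (i < size F)%N -> red (T_ i) g ->
  ksum (reduction F) (ebasis i g).
Proof.
have subR := ksum_subspace all_red_op_reduction.
elim/ltn_ind: i g => i IHi g; elim/(well_founded_induction wfG): g => g IHg i_lt rg.
have [[L [uL L_ok syz0 _ [ig_L ig_max]]]|not_lt] := classic (in_lt_syz F i g); last first.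
  apply: ker_ksum all_red_op_reduction _ (reduce_op_ker_basis i_lt not_lt).
  by apply/In_reduction; exists i.
have [x0 x0L x0E] : exists2 x0, x0 \in L & x0.1 = (i, g) by case/mapP: ig_L => x0; exists x0.
have [_ _ x0_neq0] := L_ok x0 x0L.
rewrite syz_sum in syz0; last by move=> x /L_ok [].
rewrite -[i]/(i, g).1 -[g]/(i, g).2 -x0E (syz_lead_eq x0L x0_neq0 syz0).
apply: (subspaceZ subR); rewrite big_seq; apply: (subspace_sum subR) => y y_rem.
apply: (subspaceZ subR); have yL := mem_rem y_rem; have [y_lt ry _] := L_ok y yL.
have y_neq : y.1 != (i, g).
  move: uL; rewrite (perm_uniq (perm_map fst (perm_to_rem x0L))) /= x0E => /andP [+ _].
  by apply: contraNneq => <-; apply: map_f.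
case: (ig_max y.1 (map_f fst yL)) => [lt_i | [/= y_i y_g]]; first exact: IHi.
move: y_neq ry; case: y.1 y_i y_g => j h /= -> h_le_g ig_neq rh.
apply: IHg rh => //; rewrite lt_neqAle h_le_g andbT.
by apply: contraNneq ig_neq => ->.
Qed.

Lemma ker_ksum_reduction i w : (i < size F)%N -> T_ i w = 0 -> ksum (reduction F) w.
Proof.
move=> i_lt Tw; have subR := ksum_subspace all_red_op_reduction.
rewrite (ker_lin_decomp (red_op_lin (redF (In_nth id i_lt))) Tw).
apply: (subspace_sum subR) => k _; apply: (subspaceZ subR).
have [nk|rk] := classic (nf (T_ i) k); last exact: ebasis_ksum_reduction.
by rewrite nk subrr; exact: (subspace0 subR).
Qed.

Lemma ksum_reduction v : ksum (reduction F) v <-> ksum F v.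
Proof.
split; [apply: (ksum_le redF) | apply: (ksum_le all_red_op_reduction)] => T.
  case/In_reduction => i i_lt -> w /(reduce_op_ker i_lt) Tw.
  exact: ker_ksum redF (In_nth id i_lt) Tw.
by case/(In_nthP id) => i i_lt -> w; apply: ker_ksum_reduction.
Qed.

End KernelSumOfReduction.
End Reduction.
End ReductionOperatorTheory.

Theorem mainTheorem8 (K : fieldType) (d : Order.disp_t) (G : orderType d)
  (wfG : well_founded (fun x y : G => (x < y)%O))
  (F : seq ({malg K[G]} -> {malg K[G]}))
  (HF : forall T, List.In T F -> is_red_op T) :
  is_completion F (F ++ inc_completion (reduction F)).
Proof.
have redR := all_red_op_reduction HF.
set C := inc_completion (reduction F).
have redFC : all_red_op (F ++ C) by apply/all_red_op_cat; split=> //; exact: inc_completion_red.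
have ksumFC v : ksum (F ++ C) v <-> ksum F v.
  split; last by apply: ksum_subset => // T FT; apply/List.in_app_iff; left.
  apply: (ksum_le HF) => T /List.in_app_iff [FT | CT] w Tw; first exact: ker_ksum HF FT Tw.
  exact/(ksum_reduction HF wfG)/(inc_completion_ker wfG redR CT Tw).
split=> [|T FT|]; last exact: wedge_ext ksumFC; last by apply/List.in_app_iff; left.
apply: (lt_free_confluent wfG redFC) => g nFCg.
move/(in_lt_sub (fun v => (ksumFC v).1))/(in_lt_sub (fun v => (ksum_reduction HF wfG v).2)).
apply: (inc_completion_lt_free wfG redR) => T /List.in_app_iff [/In_reduction [i i_lt ->] | CT].
  by apply: reduce_op_nf; apply: nFCg; apply/List.in_app_iff; left; exact: In_nth.
by apply: nFCg; apply/List.in_app_iff; right.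
Qed.
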